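(* Let $\ell,d,\rho$ be integers with $1\le\ell\le m$, $1\le d\le\ell(q-1)$ and $0\le\rho\le|\mathbb{H}^{(\ell)}_{\le d-1}|$. Then $\mathsf{SH}^{(\ell)}(\mathcal{M}^{(\ell)}_{d-1}(\rho))\cap\mathbb{H}^{(\ell)}_d=\mathcal{L}^{(\ell)}_d(\rho')$ for some nonnegative integer $\rho'$. Moreover, if $\rho$ is positive, then so is $\rho'$.
   Context: $q$ is a prime power and $m$ a positive integer. For $0\le\ell\le m$, $\mathbb{H}^{(\ell)}=\{x_0^{a_0}\cdots x_{\ell-1}^{a_{\ell-1}}:0\le a_j\le q-1\}$; $\mathbb{H}^{(\ell)}_d$ and $\mathbb{H}^{(\ell)}_{\le d}$ are its elements of degree $d$, resp. degree $\le d$. For $\mathcal{T}\subseteq\mathbb{H}^{(\ell)}$, $\mathsf{SH}^{(\ell)}(\mathcal{T})=\{\mu\in\mathbb{H}^{(\ell)}:\nu\mid\mu\text{ for some }\nu\in\mathcal{T}\}$. Lexicographic order: $x_0^{b_0}\cdots\prec x_0^{a_0}\cdots$ iff at the first index where exponents differ $a_i>b_i$. $\mathcal{M}^{(\ell)}_{k}(\rho)$ is the set of the first $\rho$ elements of $\mathbb{H}^{(\ell)}_{\le k}$ in descending lexicographic order; $\mathcal{L}^{(\ell)}_d(\rho')$ is the set of the first $\rho'$ elements of $\mathbb{H}^{(\ell)}_d$ in descending lexicographic order. *)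

From mathcomp Require Import all_boot all_order.
Set Implicit Arguments. Unset Strict Implicit. Unset Printing Implicit Defensive.

(* The monomials x_0^{a_0} ... x_{l-1}^{a_{l-1}} with 0 <= a_j <= q-1,
   represented by their exponent vectors a : 'I_l -> 'I_q.  This is H^(l). *)
Notation mon l q := {ffun 'I_l -> 'I_q}.

Section Mon.
Variables l q : nat.

Definition mdeg (mu : mon l q) : nat := \sum_(i < l) (mu i : nat).

Definition mdvd (nu mu : mon l q) : bool := [forall i, (nu i : nat) <= mu i].

(* lex_lt b a  <=>  b ≺ a : at the first index where exponents differ, a_i > b_i *)
Definition lex_lt (b a : mon l q) : bool :=
  [exists i : 'I_l, [forall j : 'I_l, (j < i) ==> (a j == b j)] && ((b i : nat) < a i)].

Definition Hle (k : nat) : {set mon l q} := [set mu | mdeg mu <= k].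
Definition Hd (d : nat) : {set mon l q} := [set mu | mdeg mu == d].

Definition SH (T : {set mon l q}) : {set mon l q} :=
  [set mu | [exists nu in T, mdvd nu mu]].

(* the first r elements of A in descending lexicographic order:
   those mu in A with fewer than r elements of A lex-greater than mu *)
Definition first_lex (A : {set mon l q}) (r : nat) : {set mon l q} :=
  [set mu in A | #|[set nu in A | lex_lt mu nu]| < r].

Definition Mset (k r : nat) : {set mon l q} := first_lex (Hle k) r.
Definition Lset (d r : nat) : {set mon l q} := first_lex (Hd d) r.

End Mon.

From mathcomp Require Import all_boot all_order.
Set Implicit Arguments. Unset Strict Implicit. Unset Printing Implicit Defensive.

(* Let M = M_(d-1)(rho) and T = SH(M) ∩ H_d. A subset of H_d is of the form
   L_d(rho') exactly when it is closed upwards for ≺, and then rho' = |T|.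
   Suppose nu ∈ M divides mu ∈ T and mu ≺ mu'; then nu ⪯ mu ≺ mu'. Let i be
   the first index where nu and mu' differ. If nu has no positive exponent
   after i, nu divides mu'; otherwise keep the exponents of nu before i, add
   one at i and zero out the rest. In both cases we get a divisor of mu' that
   is ⪰ nu and of degree ≤ deg nu, hence lies in the lex-initial segment M of
   H_(≤ d-1), so mu' ∈ T. For rho > 0, M is nonempty, and every monomial of
   degree ≤ d ≤ l(q-1) divides one of degree exactly d. *)

Lemma sum_ord_eq1 n (i : 'I_n) : \sum_(j < n) (j == i :> nat) = 1.
Proof. by rewrite (bigD1 i) //= eqxx big1 // => j; rewrite val_eqE => /negbTE ->. Qed.

Section Monomials.
Variables l q : nat.
Implicit Types (a b c mu nu : mon l q) (A S : {set mon l q}).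

Definition lex_le b a := (b == a) || lex_lt b a.

Lemma lex_ltP b a :
  reflect (exists2 i : 'I_l, forall j : 'I_l, j < i -> a j = b j & b i < a i)
          (lex_lt b a).
Proof.
apply: (iffP existsP) => [[i /andP[/forallP agree lt_i]] | [i agree lt_i]].
  by exists i => // j lt_ji; apply/eqP/(implyP (agree j)).
by exists i; rewrite lt_i andbT; apply/forallP => j; apply/implyP => /agree ->.
Qed.

Lemma lex_lt_irr a : ~~ lex_lt a a.
Proof. by apply/lex_ltP => -[i _]; rewrite ltnn. Qed.

Lemma lex_lt_trans b a c : lex_lt a b -> lex_lt b c -> lex_lt a c.
Proof.
move=> /lex_ltP[j eq_ab lt_j] /lex_ltP[i eq_bc lt_i]; apply/lex_ltP.
have [lt_ij | lt_ji | /val_inj eq_ij] := ltngtP i j.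
- exists i; last by rewrite -(eq_ab i lt_ij).
  by move=> k lt_ki; rewrite eq_bc // eq_ab // (ltn_trans lt_ki lt_ij).
- exists j; last by rewrite eq_bc.
  by move=> k lt_kj; rewrite eq_bc ?eq_ab // (ltn_trans lt_kj lt_ji).
- subst j; exists i; last exact: ltn_trans lt_j lt_i.
  by move=> k lt_ki; rewrite eq_bc ?eq_ab.
Qed.

Lemma lex_le_lt_trans b a c : lex_le a b -> lex_lt b c -> lex_lt a c.
Proof. by case/orP => [/eqP -> // | /lex_lt_trans]; apply. Qed.

Lemma lex_lt_total a b : a != b -> lex_lt a b || lex_lt b a.
Proof.
move=> neq_ab; have [i0 neq_i0] : exists i, a i != b i.
  apply/existsP; apply: contraNT neq_ab => /existsPn eq_ab.
  by apply/eqP/ffunP => i; apply/eqP/negPn.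
have [i neq_i min_i] := arg_minnP (P := fun i : 'I_l => a i != b i) val neq_i0.
have agree (j : 'I_l) : j < i -> a j = b j.
  by move=> lt_ji; apply/eqP; apply: contraTT lt_ji => /min_i; rewrite -leqNgt.
have [lt_ab | lt_ba | /val_inj eq_i] := ltngtP (a i) (b i).
- by apply/orP; left; apply/lex_ltP; exists i => // j /agree.
- by apply/orP; right; apply/lex_ltP; exists i.
- by rewrite eq_i eqxx in neq_i.
Qed.

Lemma mdvd_refl a : mdvd a a.
Proof. exact/forallP. Qed.

Lemma mdvd_trans b a c : mdvd a b -> mdvd b c -> mdvd a c.
Proof.
by move=> /forallP le_ab /forallP le_bc; apply/forallP => i; apply: leq_trans (le_bc i).
Qed.

Lemma mdvd_lex_le nu mu : mdvd nu mu -> lex_le nu mu.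
Proof.
move=> /forallP le_nu; rewrite /lex_le; have [//|neq] := eqVneq nu mu.
case/orP: (lex_lt_total neq) => // /lex_ltP[i _].
by rewrite ltnNge le_nu.
Qed.

Lemma card_lex_above_lt A mu nu : lex_lt mu nu -> nu \in A ->
  #|[set x in A | lex_lt nu x]| < #|[set x in A | lex_lt mu x]|.
Proof.
move=> lt_mu nu_A; apply/proper_card/properP; split.
  by apply/subsetP => x; rewrite !inE => /andP[-> /(lex_lt_trans lt_mu)].
by exists nu; rewrite !inE ?nu_A ?lt_mu // (negbTE (lex_lt_irr nu)) andbF.
Qed.

Lemma first_lex_up A r mu nu :
  mu \in first_lex A r -> nu \in A -> lex_le mu nu -> nu \in first_lex A r.
Proof.
rewrite !inE => /andP[_ rank_mu] nu_A /orP[/eqP eq_mu | lt_mu].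
  by rewrite nu_A -eq_mu.
by rewrite nu_A (ltn_trans (card_lex_above_lt lt_mu nu_A)).
Qed.

Lemma first_lex_card_upclosed A S : S \subset A ->
  {in S & A, forall mu nu, lex_lt mu nu -> nu \in S} -> first_lex A #|S| = S.
Proof.
move=> sub_SA up_S; apply/setP => mu; rewrite inE.
have [mu_S | mu_notS] := boolP (mu \in S).
  rewrite (subsetP sub_SA) //=; apply/proper_card/properP; split.
    by apply/subsetP => x; rewrite inE => /andP[x_A /(up_S _ _ mu_S x_A)].
  by exists mu; rewrite // inE (negbTE (lex_lt_irr mu)) andbF.
apply/negbTE; rewrite negb_and -leqNgt; case: (boolP (mu \in A)) => //= mu_A.
apply: subset_leq_card; apply/subsetP => x x_S; rewrite inE (subsetP sub_SA) //=.
have /lex_lt_total/orP[lt_mu|//] : x != mu by apply: contraNneq mu_notS => <-.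
by rewrite (up_S _ _ x_S mu_A lt_mu) in mu_notS.
Qed.

Lemma first_lex_neq0 A r : A != set0 -> 0 < r -> first_lex A r != set0.
Proof.
case/set0Pn => a a_A r_gt0.
pose rank x := #|[set y in A | lex_lt x y]|.
have [mu mu_A min_mu] := arg_minnP rank a_A.
apply/set0Pn; exists mu.
rewrite inE (mu_A : mu \in A) (leq_trans _ r_gt0) // ltnS leqn0 cards_eq0.
apply/eqP/setP => y; rewrite !inE; apply/negbTE; apply/andP => -[y_A lt_mu].
by have := card_lex_above_lt lt_mu y_A; rewrite ltnNge min_mu.
Qed.

Definition mon_of (f : 'I_l -> nat) (f_lt : forall j, f j < q) : mon l q :=
  [ffun j => Ordinal (f_lt j)].

Lemma mon_ofE f (f_lt : forall j, f j < q) j : mon_of f_lt j = f j :> nat.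
Proof. by rewrite ffunE. Qed.

Lemma lex_lt_mdvd_above nu mu : lex_lt nu mu ->
  exists2 nu', mdvd nu' mu & lex_le nu nu' && (mdeg nu' <= mdeg nu).
Proof.
case/lex_ltP=> i agree lt_i.
have [/existsP[k /andP[lt_ik nu_k]] | /existsPn tail0] :=
  boolP [exists k : 'I_l, (i < k) && (0 < nu k)]; last first.
  exists nu; last by rewrite /lex_le eqxx leqnn.
  apply/forallP => j; have [lt_ji | lt_ij | /val_inj ->] := ltngtP j i.
  - by rewrite agree.
  - by move: (tail0 j); rewrite lt_ij -leqNgt leqn0 => /eqP ->.
  - exact: ltnW.
pose f (j : 'I_l) := if j < i then nu j : nat else if j == i :> nat then (nu i).+1 else 0.
have f_lt j : f j < q.
  rewrite /f; case: ifP => _; first exact: ltn_ord.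
  by case: ifP => _; [apply: leq_ltn_trans lt_i _ | apply: leq_ltn_trans (ltn_ord (nu j))].
exists (mon_of f_lt).
  apply/forallP => j; rewrite mon_ofE /f.
  have [lt_ji | // | /val_inj eq_ji] := ltngtP j i; [by rewrite agree | by rewrite eq_ji].
apply/andP; split.
  apply/orP; right; apply/lex_ltP; exists i; last by rewrite mon_ofE /f ltnn eqxx.
  by move=> j lt_ji; apply: val_inj; rewrite /= mon_ofE /f lt_ji.
(* The unit added at [i] is paid for by the exponent at [k] > 0, which is zeroed. *)
have f_le j : f j + (j == k :> nat) <= nu j + (j == i :> nat).
  rewrite /f; have [lt_ji | lt_ij | /val_inj eq_ji] := ltngtP j i.
  - by rewrite (ltn_eqF (ltn_trans lt_ji lt_ik)).
  - by case: eqP => [/val_inj eq_jk | _] //; rewrite eq_jk addn0.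
  - by rewrite eq_ji (ltn_eqF lt_ik) addn0 addn1.
rewrite -(leq_add2r 1) -{1}(sum_ord_eq1 k) -(sum_ord_eq1 i) /mdeg -!big_split /=.
by apply: leq_sum => j _; rewrite mon_ofE.
Qed.

Lemma mdvd_mdeg_succ nu : mdeg nu < l * (q - 1) ->
  exists2 mu, mdvd nu mu & mdeg mu = (mdeg nu).+1.
Proof.
move=> deg_lt; have [i lt_i] : exists i, (nu i).+1 < q.
  apply/existsP; apply: contraTT deg_lt => /existsPn full; rewrite -leqNgt.
  rewrite -[X in X * _]card_ord -sum_nat_const /mdeg; apply: leq_sum => i _.
  by rewrite leq_subLR add1n leqNgt; apply: full.
pose f j := nu j + (j == i :> nat).
have f_lt j : f j < q.
  by rewrite /f; case: eqP => [/val_inj eq_ji | _]; rewrite ?eq_ji ?addn1 ?addn0.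
exists (mon_of f_lt); first by apply/forallP => j; rewrite mon_ofE leq_addr.
rewrite /mdeg; under eq_bigr do rewrite mon_ofE.
by rewrite big_split /= sum_ord_eq1 addn1.
Qed.

Lemma mdvd_mdeg_eq nu d : mdeg nu <= d -> d <= l * (q - 1) ->
  exists2 mu, mdvd nu mu & mdeg mu = d.
Proof.
elim: d => [|d IH] in nu *.
  by rewrite leqn0 => /eqP deg0 _; exists nu; first exact: mdvd_refl.
rewrite leq_eqVlt => /orP[/eqP deg_eq | deg_lt] d_lt.
  by exists nu; first exact: mdvd_refl.
have [mu' nu_mu' deg_mu'] := IH nu (deg_lt : mdeg nu <= d) (ltnW d_lt).
have [mu mu'_mu deg_mu] : exists2 mu, mdvd mu' mu & mdeg mu = d.+1.
  by rewrite -deg_mu'; apply: mdvd_mdeg_succ; rewrite deg_mu'.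
by exists mu; [exact: mdvd_trans mu'_mu | rewrite deg_mu].
Qed.

Lemma Hle_neq0 k : 0 < q -> Hle l q k != set0.
Proof.
move=> q_gt0; apply/set0Pn; exists [ffun=> Ordinal q_gt0].
by rewrite inE /mdeg big1 // => i _; rewrite ffunE.
Qed.

Lemma SH_Mset_lex_up k r mu mu' :
  mu \in SH (Mset l q k r) -> lex_lt mu mu' -> mu' \in SH (Mset l q k r).
Proof.
rewrite !inE => /existsP[nu /andP[nu_M nu_mu]] lt_mu.
have [nu' nu'_mu' /andP[le_nu deg_nu']] :=
  lex_lt_mdvd_above (lex_le_lt_trans (mdvd_lex_le nu_mu) lt_mu).
apply/existsP; exists nu'; rewrite nu'_mu' andbT (first_lex_up nu_M _ le_nu) //.
by move: nu_M; rewrite !inE => /andP[deg_nu _]; apply: leq_trans deg_nu.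
Qed.

End Monomials.

Theorem corollary3p3 (q m l d rho : nat)
  (hq : exists p k, [/\ prime p, 0 < k & q = p ^ k])
  (hm : 0 < m) (hl1 : 1 <= l) (hlm : l <= m)
  (hd1 : 1 <= d) (hd2 : d <= l * (q - 1))
  (hrho : rho <= #|Hle l q d.-1|) :
  exists rho' : nat,
    [/\ rho' <= #|Hd l q d|,
        SH (Mset l q d.-1 rho) :&: Hd l q d = Lset l q d rho'
      & 0 < rho -> 0 < rho'].
Proof.
set T := SH (Mset l q d.-1 rho) :&: Hd l q d.
exists #|T|; split.
- exact/subset_leq_card/subsetIr.
- apply/esym/first_lex_card_upclosed; first exact: subsetIr.
  move=> mu mu' /setIP[mu_SH _] mu'_d lt_mu.
  by rewrite in_setI mu'_d andbT (SH_Mset_lex_up mu_SH lt_mu).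
(* Of the hypotheses on q, m, l and d, only 0 < q and d <= l(q-1) matter. *)
move=> rho_gt0.
have q_gt0 : 0 < q by case: hq => p [k [p_pr _ ->]]; rewrite expn_gt0 prime_gt0.
have /set0Pn[nu nu_M] := first_lex_neq0 (Hle_neq0 l d.-1 q_gt0) rho_gt0.
have deg_nu : mdeg nu <= d.
  by move: nu_M; rewrite !inE => /andP[/leq_trans->] //; exact: leq_pred.
have [mu nu_mu deg_mu] := mdvd_mdeg_eq deg_nu hd2.
apply/card_gt0P; exists mu; rewrite !inE deg_mu eqxx andbT.
by apply/existsP; exists nu; rewrite nu_M.
Qed.
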